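(* There exists a continuous function $f:\mathbb{R}\to\mathbb{R}$ such that for every $x\in\mathbb{R}$ there is $\xi_x\in\mathbb{R}$ with $$\liminf_{y\to x}\frac{f(y)-f(x)-\xi_x(y-x)}{|y-x|^2}>-\infty,$$ and yet there is a set $S\subset\mathbb{R}$ of positive Lebesgue measure such that for every $x\in S$ and every $\xi\in\mathbb{R}$, $$\limsup_{y\to x}\frac{f(y)-f(x)-\xi(y-x)}{|y-x|^2}=+\infty.$$ *)

From Stdlib Require Import Reals Lra.
Open Scope R_scope.

(* Lebesgue outer measure of S is <= c:
   for every eps > 0 there is a countable cover of S by open intervals
   (a n, b n) with total length <= c + eps. *)
Definition outer_le (S : R -> Prop) (c : R) : Prop :=
  forall eps : R, 0 < eps ->
    exists a b : nat -> R,
      (forall n, a n <= b n) /\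
      (forall x, S x -> exists n, a n < x < b n) /\
      (forall N, sum_f_R0 (fun n => b n - a n) N <= c + eps).

(* Carathéodory measurability: for every A,
   outer(A /\ S) + outer(A \ S) <= outer(A)  (the reverse inequality is
   automatic). Since {c | outer_le S c} = [outer S, +oo), this reads: *)
Definition lebesgue_measurable (S : R -> Prop) : Prop :=
  forall (A : R -> Prop) (c : R), outer_le A c ->
    exists c1 c2 : R,
      outer_le (fun x => A x /\ S x) c1 /\
      outer_le (fun x => A x /\ ~ S x) c2 /\
      c1 + c2 <= c.

Definition positive_measure (S : R -> Prop) : Prop :=
  lebesgue_measurable S /\ ~ outer_le S 0.

Definition liminf_gt_neg_infty (g : R -> R) (x : R) : Prop :=
  exists M delta : R, 0 < delta /\
    forall y, 0 < Rabs (y - x) < delta -> M <= g y.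

Definition limsup_eq_pos_infty (g : R -> R) (x : R) : Prop :=
  forall M delta : R, 0 < delta ->
    exists y, 0 < Rabs (y - x) < delta /\ M < g y.

Definition quot2 (f : R -> R) (x xi : R) : R -> R :=
  fun y => (f y - f x - xi * (y - x)) / (Rabs (y - x)) ^ 2.

From Stdlib Require Import Reals Lra Lia Classical.
Open Scope R_scope.

(* f is the supremum of parabolic bumps: the bump centred at the m-th dyadic
   midpoint c_m of level n has height (3/4)^n and radius 2^-(m+3).  Above any
   positive level only finitely many bumps matter, so where f > 0 it is
   attained by a single bump, a parabola touching f from below; where f = 0
   the bound f >= 0 suffices.  The points of [0,1] outside every bump support
   form a set of measure at least 1 - sum_m 2^-(m+2) = 1/2.  At such a point
   f vanishes, yet every level n has a bump of height (3/4)^n centred within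
   2^-(n+1), and (3/4)^n 4^n is unbounded. *)

Ltac minmax_lra := unfold Rmax, Rmin in *; repeat destruct Rle_dec; lra.

Lemma Rle_div_of_mul_le k a D : 0 < D -> k * D <= a -> k <= a / D.
Proof.
  intros HD H. replace k with (k * D / D) by (field; lra).
  apply Rmult_le_compat_r; [left; apply Rinv_0_lt_compat|]; lra.
Qed.

Lemma Rlt_div_of_mul_lt k a D : 0 < D -> k * D < a -> k < a / D.
Proof.
  intros HD H. replace k with (k * D / D) by (field; lra).
  apply Rmult_lt_compat_r; [apply Rinv_0_lt_compat|]; lra.
Qed.

Lemma abs_sub_ge_iff r x c : r <= Rabs (x - c) <-> ~ (c - r < x /\ x < c + r).
Proof. unfold Rabs. destruct Rcase_abs; split; intros; try lra; apply Rnot_lt_le; lra. Qed.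

Lemma continuity_pt_Rmax f g x :
  continuity_pt f x -> continuity_pt g x ->
  continuity_pt (fun y => Rmax (f y) (g y)) x.
Proof.
  intros Hf Hg.
  apply (continuity_pt_locally_ext (fun y => (f y + g y + Rabs (f y - g y)) / 2) _ 1);
    [lra| intros y _; unfold Rmax, Rabs; destruct Rle_dec, Rcase_abs; lra|].
  apply (continuity_pt_mult _ (fun _ => / 2)); [|apply continuity_pt_const; intros ? ?; reflexivity].
  apply continuity_pt_plus; [apply continuity_pt_plus; assumption|].
  apply (continuity_pt_comp (fun y => f y - g y) Rabs);
    [apply continuity_pt_minus; assumption|apply Rcontinuity_abs].
Qed.

Lemma pow_le_1_antimono x m n : 0 <= x <= 1 -> (m <= n)%nat -> x ^ n <= x ^ m.
Proof.
  intros Hx Hmn. induction Hmn as [|n Hmn IH]; [lra|]. simpl.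
  assert (0 <= x ^ n) by (apply pow_le; lra). nra.
Qed.

Lemma pow_small x eps : 0 <= x < 1 -> 0 < eps -> exists n, x ^ n < eps.
Proof.
  intros Hx Heps.
  destruct (pow_lt_1_zero x ltac:(rewrite Rabs_right; lra) eps Heps) as [n Hn].
  exists n. specialize (Hn n (le_n n)).
  rewrite Rabs_right in Hn; [lra | apply Rle_ge, pow_le; lra].
Qed.

Lemma sum_f_R0_le_mono (u : nat -> R) N K :
  (forall n, 0 <= u n) -> (N <= K)%nat -> sum_f_R0 u N <= sum_f_R0 u K.
Proof.
  intros Hu HK. induction HK as [|K HK IH]; [lra|].
  simpl. specialize (Hu (S K)). lra.
Qed.

Lemma sum_geom_half_le q N :
  0 <= q -> sum_f_R0 (fun n => q * (/2) ^ n) N <= 2 * q.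
Proof.
  intros Hq.
  rewrite (sum_eq _ (fun n => (/2) ^ n * q)) by (intros; ring).
  rewrite <- scal_sum, tech3 by lra.
  assert (0 < (/2) ^ S N) by (apply pow_lt; lra).
  replace ((1 - (/2) ^ S N) / (1 - /2)) with (2 * (1 - (/2) ^ S N)) by field.
  nra.
Qed.

Definition interleave (u v : nat -> R) (n : nat) : R :=
  if Nat.even n then u (Nat.div2 n) else v (Nat.div2 n).

Lemma interleave_even u v k : interleave u v (2 * k) = u k.
Proof. unfold interleave. rewrite Nat.even_even, Nat.div2_double. reflexivity. Qed.

Lemma interleave_odd u v k : interleave u v (S (2 * k)) = v k.
Proof.
  unfold interleave. replace (S (2 * k)) with (2 * k + 1)%nat by lia.
  rewrite Nat.even_odd. replace (2 * k + 1)%nat with (S (2 * k)) by lia.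
  rewrite Nat.div2_succ_double. reflexivity.
Qed.

Lemma interleave_sub u v u' v' n :
  interleave u v n - interleave u' v' n =
  interleave (fun k => u k - u' k) (fun k => v k - v' k) n.
Proof. unfold interleave. destruct (Nat.even n); reflexivity. Qed.

Lemma sum_interleave_odd u v K :
  sum_f_R0 (interleave u v) (S (2 * K)) = sum_f_R0 u K + sum_f_R0 v K.
Proof.
  induction K as [|K IH]; [simpl; unfold interleave; simpl; lra|].
  replace (S (2 * S K)) with (S (S (S (2 * K)))) by lia.
  rewrite tech5, tech5, IH.
  replace (S (S (2 * K))) with (2 * S K)%nat by lia.
  rewrite interleave_even, interleave_odd. simpl. lra.
Qed.

Lemma sum_interleave_le u v N :
  (forall n, 0 <= u n) -> (forall n, 0 <= v n) ->
  sum_f_R0 (interleave u v) N <= sum_f_R0 u N + sum_f_R0 v N.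
Proof.
  intros Hu Hv. rewrite <- sum_interleave_odd.
  apply sum_f_R0_le_mono; [|lia].
  intros n. unfold interleave. destruct (Nat.even n); auto.
Qed.

(** * Outer measure *)

Lemma outer_le_of_cover X (a b : nat -> R) c :
  (forall n, a n <= b n) -> (forall x, X x -> exists n, a n < x < b n) ->
  (forall N, sum_f_R0 (fun n => b n - a n) N <= c) -> outer_le X c.
Proof.
  intros Hab Hcov Hsum eps Heps. exists a, b.
  repeat split; auto. intros N. specialize (Hsum N). lra.
Qed.

Lemma outer_le_subset X Y c :
  (forall x, X x -> Y x) -> outer_le Y c -> outer_le X c.
Proof.
  intros HXY HY eps Heps. destruct (HY eps Heps) as (a & b & Hab & Hcov & Hsum).
  exists a, b. repeat split; auto.
Qed.

Lemma outer_le_ge0 X c : outer_le X c -> 0 <= c.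
Proof.
  intros HX. apply Rle_plus_epsilon. intros eps Heps.
  destruct (HX eps Heps) as (a & b & Hab & _ & Hsum).
  specialize (Hsum O). specialize (Hab O). simpl in Hsum. lra.
Qed.

Lemma outer_le_union X Y c1 c2 :
  outer_le X c1 -> outer_le Y c2 -> outer_le (fun x => X x \/ Y x) (c1 + c2).
Proof.
  intros HX HY eps Heps.
  destruct (HX (eps / 2) ltac:(lra)) as (a & b & Hab & Hcov & Hsum).
  destruct (HY (eps / 2) ltac:(lra)) as (a' & b' & Hab' & Hcov' & Hsum').
  exists (interleave a a'), (interleave b b'). repeat split.
  - intros n. unfold interleave. destruct (Nat.even n); auto.
  - intros x [Hx | Hx].
    + destruct (Hcov x Hx) as [n Hn]. exists (2 * n)%nat.
      rewrite !interleave_even. exact Hn.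
    + destruct (Hcov' x Hx) as [n Hn]. exists (S (2 * n)).
      rewrite !interleave_odd. exact Hn.
  - intros N. rewrite (sum_eq _ _ N (fun n _ => interleave_sub b b' a a' n)).
    eapply Rle_trans; [apply sum_interleave_le|].
    + intros n. specialize (Hab n). lra.
    + intros n. specialize (Hab' n). lra.
    + specialize (Hsum N). specialize (Hsum' N). lra.
Qed.

Lemma outer_le_least X c0 :
  outer_le X c0 -> exists d, outer_le X d /\ forall c, outer_le X c -> d <= c.
Proof.
  intros H0.
  set (E := fun d => forall c, outer_le X c -> d <= c).
  destruct (completeness E) as [d [Hub Hlub]].
  - exists c0. intros d Hd. exact (Hd c0 H0).
  - exists 0. intros c Hc. exact (outer_le_ge0 X c Hc).
  - assert (Hd : E d) by (intros c Hc; apply Hlub; intros e He; exact (He c Hc)).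
    exists d. split; [|exact Hd]. intros eps Heps.
    assert (exists c, outer_le X c /\ c < d + eps / 2) as [c [Hc Hcd]].
    { apply NNPP. intros Hno.
      assert (Hlow : E (d + eps / 2)).
      { intros c Hc. apply Rnot_lt_le. intros Hlt. apply Hno. eauto. }
      specialize (Hub _ Hlow). lra. }
    destruct (Hc (eps / 2) ltac:(lra)) as (a & b & Hab & Hcov & Hsum).
    exists a, b. repeat split; auto. intros N. specialize (Hsum N). lra.
Qed.

Lemma outer_le_of_cover_pair X Y (a1 b1 a2 b2 : nat -> R) C :
  (forall n, a1 n <= b1 n) -> (forall x, X x -> exists n, a1 n < x < b1 n) ->
  (forall n, a2 n <= b2 n) -> (forall x, Y x -> exists n, a2 n < x < b2 n) ->
  (forall N, sum_f_R0 (fun n => b1 n - a1 n) N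
             + sum_f_R0 (fun n => b2 n - a2 n) N <= C) ->
  exists c1 c2, outer_le X c1 /\ outer_le Y c2 /\ c1 + c2 <= C.
Proof.
  intros Hab1 Hcov1 Hab2 Hcov2 Hsum.
  assert (Hbudget : forall N N', sum_f_R0 (fun n => b1 n - a1 n) N
                                 <= C - sum_f_R0 (fun n => b2 n - a2 n) N').
  { intros N N'. specialize (Hsum (Nat.max N N')).
    pose proof (sum_f_R0_le_mono (fun n => b1 n - a1 n) N (Nat.max N N')
                  ltac:(intros n; specialize (Hab1 n); lra) ltac:(lia)).
    pose proof (sum_f_R0_le_mono (fun n => b2 n - a2 n) N' (Nat.max N N')
                  ltac:(intros n; specialize (Hab2 n); lra) ltac:(lia)).
    lra. }
  assert (HX : forall N', outer_le X (C - sum_f_R0 (fun n => b2 n - a2 n) N'))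
    by (intros N'; apply (outer_le_of_cover X a1 b1); auto).
  destruct (outer_le_least X _ (HX O)) as [d1 [Hd1 Hmin1]].
  exists d1, (C - d1). repeat split; [exact Hd1| |lra].
  apply (outer_le_of_cover Y a2 b2); auto.
  intros N'. specialize (Hmin1 _ (HX N')). lra.
Qed.

Definition overlap (a b t : R) : R := Rmax 0 (Rmin b t - Rmax a 0).

Lemma overlap_ge0 a b t : 0 <= overlap a b t.
Proof. unfold overlap. minmax_lra. Qed.

Lemma overlap_mono a b t t' : t <= t' -> overlap a b t <= overlap a b t'.
Proof. intros. unfold overlap. minmax_lra. Qed.

Lemma overlap_grow a b t t' :
  Rmax a 0 <= t -> t <= t' -> t' <= b -> overlap a b t + (t' - t) <= overlap a b t'.
Proof. intros. unfold overlap in *. minmax_lra. Qed.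

Lemma overlap_le_length a b t : a <= b -> overlap a b t <= b - a.
Proof. intros. unfold overlap. minmax_lra. Qed.

Lemma sum_f_R0_le_gap (u v : nat -> R) k K d :
  (forall n, u n <= v n) -> (k <= K)%nat -> u k + d <= v k ->
  sum_f_R0 u K + d <= sum_f_R0 v K.
Proof.
  intros Huv HkK Hk. induction K as [|K IH]; simpl.
  - replace k with O in Hk by lia. exact Hk.
  - pose proof (sum_Rle u v K (fun n _ => Huv n)). specialize (Huv (S K)).
    destruct (Nat.eq_dec k (S K)) as [-> | Hne]; [lra|].
    specialize (IH ltac:(lia)). lra.
Qed.

(* The supremum [s] of the t in [0,1] such that finitely many intervals
   already cover a length t of (0, t) must be 1: the interval containing s
   lets one go beyond s. *)
Lemma unit_interval_cover_length (a b : nat -> R) :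
  (forall n, a n <= b n) -> (forall x, 0 <= x <= 1 -> exists n, a n < x < b n) ->
  exists N, 1 <= sum_f_R0 (fun n => b n - a n) N.
Proof.
  intros Hab Hcov.
  set (covered := fun N t => sum_f_R0 (fun n => overlap (a n) (b n) t) N).
  set (G := fun t => 0 <= t <= 1 /\ exists N, t <= covered N t).
  assert (HG0 : G 0) by (split; [lra|]; exists O; apply overlap_ge0).
  destruct (completeness G) as [s [Hub Hlub]].
  { exists 1. intros t [Ht _]. lra. }
  { exists 0. exact HG0. }
  assert (Hs : 0 <= s <= 1).
  { split; [apply Hub, HG0|apply Hlub; intros t [Ht _]; lra]. }
  destruct (Hcov s Hs) as [k Hk].
  assert (Ht : exists t, G t /\ Rmax (a k) 0 <= t <= s).
  { destruct (Rlt_or_le (a k) 0).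
    - exists 0. split; [exact HG0|minmax_lra].
    - apply NNPP. intros Hno. assert (s <= a k); [|lra].
      apply Hlub. intros t Gt. apply Rnot_lt_le. intros Hlt. apply Hno.
      exists t. split; [exact Gt|]. split; [minmax_lra|]. apply Hub, Gt. }
  destruct Ht as (t & [_ [N HN]] & Hkt).
  set (t' := Rmin 1 ((s + b k) / 2)).
  assert (Gt' : G t').
  { split; [unfold t'; minmax_lra|]. exists (Nat.max N k).
    assert (covered N t <= covered (Nat.max N k) t).
    { apply sum_f_R0_le_mono; [intros; apply overlap_ge0|lia]. }
    assert (covered (Nat.max N k) t + (t' - t) <= covered (Nat.max N k) t').
    { apply sum_f_R0_le_gap with k; [| lia |].
      - intros n. apply overlap_mono. unfold t'. minmax_lra.
      - apply overlap_grow; unfold t'; minmax_lra. }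
    lra. }
  assert (Ht'1 : t' = 1) by (pose proof (Hub t' Gt'); unfold t' in *; minmax_lra).
  rewrite Ht'1 in Gt'. destruct Gt' as [_ [N' HN']].
  exists N'. eapply Rle_trans; [exact HN'|].
  apply sum_Rle. intros n _. apply overlap_le_length, Hab.
Qed.

Lemma outer_le_unit_interval c : outer_le (fun x => 0 <= x <= 1) c -> 1 <= c.
Proof.
  intros H. apply Rle_plus_epsilon. intros eps Heps.
  destruct (H eps Heps) as (a & b & Hab & Hcov & Hsum).
  destruct (unit_interval_cover_length a b Hab Hcov) as [N HN].
  specialize (Hsum N). lra.
Qed.

(** * Measurable sets *)

Lemma lebesgue_measurable_of_approx E :
  (forall A c eps, outer_le A c -> 0 < eps ->
     exists c1 c2, outer_le (fun x => A x /\ E x) c1 /\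
                   outer_le (fun x => A x /\ ~ E x) c2 /\ c1 + c2 <= c + eps) ->
  lebesgue_measurable E.
Proof.
  intros Happrox A c HA.
  destruct (outer_le_least (fun x => A x /\ E x) c) as [d1 [Hd1 Hmin1]].
  { apply (outer_le_subset _ A); [tauto|exact HA]. }
  destruct (outer_le_least (fun x => A x /\ ~ E x) c) as [d2 [Hd2 Hmin2]].
  { apply (outer_le_subset _ A); [tauto|exact HA]. }
  exists d1, d2. repeat split; auto.
  apply Rle_plus_epsilon. intros eps Heps.
  destruct (Happrox A c eps HA Heps) as (c1 & c2 & H1 & H2 & H12).
  specialize (Hmin1 c1 H1). specialize (Hmin2 c2 H2). lra.
Qed.

Lemma lebesgue_measurable_ext E F :
  (forall x, E x <-> F x) -> lebesgue_measurable E -> lebesgue_measurable F.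
Proof.
  intros HEF HE A c HA. destruct (HE A c HA) as (c1 & c2 & H1 & H2 & H12).
  exists c1, c2. repeat split; auto.
  - eapply outer_le_subset; [|exact H1].
    intros x [Hx HF]. split; [exact Hx|apply HEF, HF].
  - eapply outer_le_subset; [|exact H2].
    intros x [Hx HnF]. split; [exact Hx|]. intros HE'. apply HnF, HEF, HE'.
Qed.

Lemma lebesgue_measurable_compl E :
  lebesgue_measurable E -> lebesgue_measurable (fun x => ~ E x).
Proof.
  intros HE A c HA. destruct (HE A c HA) as (c1 & c2 & H1 & H2 & H12).
  exists c2, c1. repeat split; auto; [|lra].
  eapply outer_le_subset; [|exact H1].
  intros x [Hx HnnE]. split; [exact Hx|exact (NNPP _ HnnE)].
Qed.

Lemma lebesgue_measurable_inter E F :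
  lebesgue_measurable E -> lebesgue_measurable F ->
  lebesgue_measurable (fun x => E x /\ F x).
Proof.
  intros HE HF A c HA. destruct (HE A c HA) as (c1 & c2 & H1 & H2 & H12).
  destruct (HF _ _ H1) as (d1 & d2 & K1 & K2 & K12).
  exists d1, (d2 + c2). repeat split; [| |lra].
  - eapply outer_le_subset; [|exact K1]. tauto.
  - apply (outer_le_subset _ (fun x => (A x /\ E x) /\ ~ F x \/ A x /\ ~ E x));
      [|apply outer_le_union; assumption].
    intros x [Hx Hn]. destruct (classic (E x)); [left|right]; tauto.
Qed.

(* The split endpoints are functions of (a, b, d), so that splitting a whole
   cover needs no choice. *)
Lemma lebesgue_measurable_of_interval_split E (l1 u1 l2 u2 : R -> R -> R -> R) :
  (forall a b d, a <= b -> 0 < d ->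
     l1 a b d <= u1 a b d /\ l2 a b d <= u2 a b d /\
     (forall x, a < x < b -> E x -> l1 a b d < x < u1 a b d) /\
     (forall x, a < x < b -> ~ E x -> l2 a b d < x < u2 a b d) /\
     u1 a b d - l1 a b d + (u2 a b d - l2 a b d) <= b - a + d) ->
  lebesgue_measurable E.
Proof.
  intros Hsplit. apply lebesgue_measurable_of_approx. intros A c eps HA Heps.
  destruct (HA (eps / 2) ltac:(lra)) as (a & b & Hab & Hcov & Hsum).
  set (d := fun n => eps / 4 * (/2) ^ n).
  assert (Hs : forall n, _) by
    (intros n; refine (Hsplit (a n) (b n) (d n) (Hab n) _);
     unfold d; assert (0 < (/2) ^ n) by (apply pow_lt; lra); nra).
  apply (outer_le_of_cover_pair _ _
           (fun n => l1 (a n) (b n) (d n)) (fun n => u1 (a n) (b n) (d n))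
           (fun n => l2 (a n) (b n) (d n)) (fun n => u2 (a n) (b n) (d n))).
  - intros n. apply Hs.
  - intros x [Hx HE]. destruct (Hcov x Hx) as [n Hn]. exists n. apply Hs; auto.
  - intros n. apply Hs.
  - intros x [Hx HE]. destruct (Hcov x Hx) as [n Hn]. exists n. apply Hs; auto.
  - intros N. rewrite <- plus_sum.
    eapply Rle_trans.
    { apply (sum_Rle _ (fun n => (b n - a n) + d n)). intros n _. apply Hs. }
    rewrite plus_sum. pose proof (sum_geom_half_le (eps / 4) N ltac:(lra)).
    specialize (Hsum N). unfold d. lra.
Qed.

Lemma lebesgue_measurable_lt t : lebesgue_measurable (fun x => x < t).
Proof.
  apply (lebesgue_measurable_of_interval_split _
           (fun a b d => a) (fun a b d => Rmax a (Rmin b t))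
           (fun a b d => Rmin b (Rmax a (t - d / 2))) (fun a b d => b)).
  intros a b d Hab Hd. repeat split; intros; minmax_lra.
Qed.

Lemma lebesgue_measurable_gt t : lebesgue_measurable (fun x => t < x).
Proof.
  apply (lebesgue_measurable_of_interval_split _
           (fun a b d => Rmin b (Rmax a t)) (fun a b d => b)
           (fun a b d => a) (fun a b d => Rmax a (Rmin b (t + d / 2)))).
  intros a b d Hab Hd. repeat split; intros; minmax_lra.
Qed.

Lemma lebesgue_measurable_of_outer_approx E (F : nat -> R -> Prop) (err : nat -> R) :
  (forall M, lebesgue_measurable (F M)) -> (forall M x, E x -> F M x) ->
  (forall M, outer_le (fun x => F M x /\ ~ E x) (err M)) ->
  (forall eps, 0 < eps -> exists M, err M <= eps) ->
  lebesgue_measurable E.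
Proof.
  intros HF HEF Herr Hlim. apply lebesgue_measurable_of_approx.
  intros A c eps HA Heps. destruct (Hlim eps Heps) as [M HM].
  destruct (HF M A c HA) as (c1 & c2 & H1 & H2 & H12).
  exists c1, (c2 + err M). repeat split; [| |lra].
  - eapply outer_le_subset; [|exact H1].
    intros x [Hx HE]. split; auto.
  - apply (outer_le_subset _ (fun x => (A x /\ ~ F M x) \/ (F M x /\ ~ E x)));
      [|apply outer_le_union; auto].
    intros x [Hx HnE]. destruct (classic (F M x)); [right|left]; tauto.
Qed.

Lemma liminf_quot2_of_quadratic_minorant f x xi K :
  (forall y, f x + xi * (y - x) - K * (y - x) ^ 2 <= f y) ->
  liminf_gt_neg_infty (quot2 f x xi) x.
Proof.
  intros Hf. exists (- K), 1. split; [lra|]. intros y Hy. unfold quot2.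
  apply Rle_div_of_mul_le; [apply pow_lt; lra|].
  rewrite pow2_abs. specialize (Hf y). lra.
Qed.

(* Bumps of height (3/4)^n at distance at most 2^-(n+1) from x outgrow any
   parabola, since (3/4)^n / 4^-(n+1) = 4 * 3^n. *)
Lemma limsup_quot2_of_steep_points f x xi :
  (forall n : nat, exists y, 0 < Rabs (y - x) <= (/2) ^ (n + 1) /\ f x + (3/4) ^ n <= f y) ->
  limsup_eq_pos_infty (quot2 f x xi) x.
Proof.
  intros Hsteep M delta Hdelta.
  set (K := Rabs xi + Rabs M + 1).
  destruct (Pow_x_infinity (3/2) ltac:(rewrite Rabs_right; lra) K) as [N1 HN1].
  destruct (pow_small (/2) delta ltac:(lra) Hdelta) as [N2 HN2].
  set (n := Nat.max N1 N2).
  specialize (HN1 n ltac:(lia)). rewrite Rabs_right in HN1 by (apply Rle_ge, pow_le; lra).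
  assert (Hn2 : (/2) ^ n <= (/2) ^ N2) by (apply pow_le_1_antimono; [lra|lia]).
  destruct (Hsteep n) as [y [[Hd0 Hd] Hfy]].
  set (d := Rabs (y - x)) in *.
  assert (Hhalf : (/2) ^ (n + 1) = / 2 * (/2) ^ n) by (rewrite pow_add; simpl; ring).
  assert (Hpos : 0 < (/2) ^ n) by (apply pow_lt; lra).
  assert (Hle1 : (/2) ^ n <= 1) by (apply (pow_le_1_antimono _ O n); [lra|lia]).
  exists y. split; [fold d; lra|].
  unfold quot2. fold d. apply Rlt_div_of_mul_lt; [apply pow_lt; lra|].
  assert (Hheight : (3/4) ^ n = (3/2) ^ n * (/2) ^ n)
    by (rewrite <- Rpow_mult_distr; f_equal; field).
  assert (Hxi : xi * (y - x) <= Rabs xi * d)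
    by (unfold d; rewrite <- Rabs_mult; apply Rle_abs).
  assert (HM : M * d ^ 2 <= Rabs M * d).
  { assert (Hd1 : d <= 1) by lra. pose proof (Rle_abs M). pose proof (Rabs_pos M).
    assert (0 <= (Rabs M - M) * (d * d)) by (apply Rmult_le_pos; nra).
    assert (0 <= Rabs M * (d * (1 - d))) by (apply Rmult_le_pos; nra).
    simpl. nra. }
  assert (HKd : 2 * K * d <= (3/4) ^ n).
  { assert (0 < K) by (unfold K; pose proof (Rabs_pos xi); pose proof (Rabs_pos M); lra).
    assert (2 * K * d <= K * (/2) ^ n) by nra.
    assert (K * (/2) ^ n <= (3/2) ^ n * (/2) ^ n) by (apply Rmult_le_compat_r; lra).
    lra. }
  unfold K in HKd. pose proof (Rabs_pos xi). pose proof (Rabs_pos M).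
  assert (0 <= Rabs xi * d) by (apply Rmult_le_pos; lra).
  assert (0 <= Rabs M * d) by (apply Rmult_le_pos; lra).
  lra.
Qed.

(** * The bump function *)

(* The m-th bump sits at the (m - 2^n)-th midpoint of level n = log2 m, so
   each level n is exhausted by m in [2^n, 2^(n+1)) (m = 0 repeats 1/2). *)
Definition level (m : nat) : nat := Nat.log2 m.
Definition center (m : nat) : R := (INR (m - 2 ^ level m) + /2) * (/2) ^ level m.
Definition radius (m : nat) : R := (/2) ^ (m + 3).
Definition height (m : nat) : R := (3/4) ^ level m.
Definition bump (m : nat) (y : R) : R :=
  height m * Rmax 0 (1 - ((y - center m) / radius m) ^ 2).

Lemma radius_pos m : 0 < radius m.
Proof. apply pow_lt. lra. Qed.

Lemma height_pos m : 0 < height m.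
Proof. apply pow_lt. lra. Qed.

Lemma height_le_tail T m : (2 ^ T <= m)%nat -> height m <= (3/4) ^ T.
Proof.
  intros HTm. apply pow_le_1_antimono; [lra|]. unfold level.
  rewrite <- (Nat.log2_pow2 T) at 1 by lia. apply Nat.log2_le_mono, HTm.
Qed.

Lemma level_pow2_add n k : (k < 2 ^ n)%nat -> level (2 ^ n + k) = n.
Proof. intros Hk. unfold level. apply Nat.log2_unique; [lia|]. simpl. lia. Qed.

Lemma bump_ge0 m y : 0 <= bump m y.
Proof.
  apply Rmult_le_pos; [apply Rlt_le, height_pos|apply Rmax_l].
Qed.

Lemma bump_le_height m y : bump m y <= height m.
Proof.
  unfold bump. pose proof (height_pos m).
  pose proof (pow2_ge_0 ((y - center m) / radius m)).
  assert (0 <= Rmax 0 (1 - ((y - center m) / radius m) ^ 2) <= 1)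
    by (split; [apply Rmax_l|apply Rmax_lub; lra]).
  nra.
Qed.

Lemma bump_center m : bump m (center m) = height m.
Proof.
  unfold bump. replace ((center m - center m) / radius m) with 0
    by (pose proof (radius_pos m); field; lra).
  unfold Rmax. destruct Rle_dec; lra.
Qed.

Lemma bump_ge_parabola m y :
  height m * (1 - ((y - center m) / radius m) ^ 2) <= bump m y.
Proof. apply Rmult_le_compat_l; [apply Rlt_le, height_pos|apply Rmax_r]. Qed.

Lemma bump_far m y : radius m <= Rabs (y - center m) -> bump m y = 0.
Proof.
  intros Hfar. pose proof (radius_pos m).
  assert (1 <= ((y - center m) / radius m) ^ 2).
  { unfold Rdiv. rewrite <- pow2_abs, Rabs_mult, Rabs_inv, (Rabs_right (radius m)) by lra.
    assert (1 <= Rabs (y - center m) * / radius m)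
      by (apply Rle_div_of_mul_le; lra).
    nra. }
  unfold bump, Rmax. destruct Rle_dec; [replace (1 - _) with 0 by lra|]; ring.
Qed.

Lemma continuity_pt_bump m x : continuity_pt (bump m) x.
Proof.
  unfold bump.
  apply (continuity_pt_mult (fun _ => height m)); [apply continuity_pt_const; intros ? ?; reflexivity|].
  apply (continuity_pt_Rmax (fun _ => 0)); [apply continuity_pt_const; intros ? ?; reflexivity|].
  reg.
Qed.

Lemma bump_has_ub y : has_ub (fun m => bump m y).
Proof.
  exists 1. intros v [m ->]. pose proof (bump_le_height m y).
  assert (height m <= 1) by (apply (pow_le_1_antimono _ O); [lra|lia]).
  lra.
Qed.

Definition bump_sup (y : R) : R := lub (fun m => bump m y) (bump_has_ub y).

Lemma bump_sup_is_lub y : is_lub (EUn (fun m => bump m y)) (bump_sup y).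
Proof. unfold bump_sup, lub. destruct ub_to_lub. assumption. Qed.

Lemma bump_le_sup m y : bump m y <= bump_sup y.
Proof. apply bump_sup_is_lub. exists m. reflexivity. Qed.

Lemma bump_sup_le y b : (forall m, bump m y <= b) -> bump_sup y <= b.
Proof. intros Hb. apply bump_sup_is_lub. intros v [m ->]. apply Hb. Qed.

Lemma bump_sup_ge0 y : 0 <= bump_sup y.
Proof. pose proof (bump_le_sup O y). pose proof (bump_ge0 O y). lra. Qed.

Fixpoint bump_max (N : nat) (y : R) : R :=
  match N with O => 0 | S N => Rmax (bump_max N y) (bump N y) end.

Lemma bump_max_ge0 N y : 0 <= bump_max N y.
Proof. induction N as [|N IH]; simpl; [lra|]. eapply Rle_trans; [exact IH|apply Rmax_l]. Qed.

Lemma bump_le_max N m y : (m < N)%nat -> bump m y <= bump_max N y.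
Proof.
  intros HmN. induction HmN as [|N HmN IH]; simpl; [apply Rmax_r|].
  eapply Rle_trans; [exact IH|apply Rmax_l].
Qed.

Lemma bump_max_le_sup N y : bump_max N y <= bump_sup y.
Proof.
  induction N as [|N IH]; simpl; [apply bump_sup_ge0|].
  apply Rmax_lub; [exact IH|apply bump_le_sup].
Qed.

Lemma bump_max_attained N y :
  bump_max N y = 0 \/ exists m, bump_max N y = bump m y.
Proof.
  induction N as [|N IH]; simpl; [left; reflexivity|].
  unfold Rmax. destruct Rle_dec; [right; exists N; reflexivity|exact IH].
Qed.

Lemma bump_sup_le_max_tail T N y :
  (2 ^ T <= N)%nat -> bump_sup y <= Rmax (bump_max N y) ((3/4) ^ T).
Proof.
  intros HTN. apply bump_sup_le. intros m. destruct (Nat.lt_ge_cases m N) as [HmN | HNm].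
  - eapply Rle_trans; [apply bump_le_max, HmN|apply Rmax_l].
  - eapply Rle_trans; [apply bump_le_height|].
    eapply Rle_trans; [apply height_le_tail, (Nat.le_trans _ _ _ HTN HNm)|apply Rmax_r].
Qed.

(* bump_sup is the uniform limit of the continuous partial maxima. *)
Lemma continuity_bump_sup : continuity bump_sup.
Proof.
  intros x.
  assert (Hcvu : CVU bump_max bump_sup x (mkposreal 1 Rlt_0_1)).
  { intros eps Heps. destruct (pow_small (3/4) eps ltac:(lra) Heps) as [T HT].
    exists (2 ^ T)%nat. intros n y Hn _.
    pose proof (bump_sup_le_max_tail T n y Hn).
    pose proof (bump_max_le_sup n y). pose proof (bump_max_ge0 n y).
    rewrite Rabs_right by lra. unfold Rmax in *. destruct Rle_dec; lra. }
  apply (CVU_continuity _ _ _ _ Hcvu); [|apply Boule_center].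
  intros n y _. induction n as [|n IH]; simpl.
  - apply continuity_pt_const. intros ? ?. reflexivity.
  - apply continuity_pt_Rmax; [exact IH|apply continuity_pt_bump].
Qed.

Lemma bump_sup_attained y : 0 < bump_sup y -> exists m, bump_sup y = bump m y.
Proof.
  intros Hpos. destruct (pow_small (3/4) (bump_sup y) ltac:(lra) Hpos) as [T HT].
  pose proof (bump_sup_le_max_tail T (2 ^ T) y (le_n _)).
  pose proof (bump_max_le_sup (2 ^ T) y).
  assert (Heq : bump_sup y = bump_max (2 ^ T) y)
    by (unfold Rmax in *; destruct Rle_dec; lra).
  destruct (bump_max_attained (2 ^ T) y) as [Hzero | [m Hm]]; [lra|].
  exists m. congruence.
Qed.

(* Where bump_sup is positive it equals a bump, whose parabola bounds it from
   below with curvature height/radius^2. *)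
Lemma bump_sup_liminf y : exists xi, liminf_gt_neg_infty (quot2 bump_sup y xi) y.
Proof.
  destruct (Req_dec (bump_sup y) 0) as [Hzero | Hnz].
  - exists 0. apply (liminf_quot2_of_quadratic_minorant _ _ _ 0).
    intros z. rewrite Hzero. pose proof (bump_sup_ge0 z). lra.
  - destruct (bump_sup_attained y) as [m Hm]; [pose proof (bump_sup_ge0 y); lra|].
    set (h := height m). set (c := center m). set (r := radius m).
    assert (Hr : 0 < r) by apply radius_pos.
    assert (Hy : bump_sup y = h * (1 - ((y - c) / r) ^ 2)).
    { rewrite Hm. unfold bump, Rmax. destruct Rle_dec; [reflexivity|].
      exfalso. apply Hnz. rewrite Hm. unfold bump, Rmax. destruct Rle_dec; [contradiction|ring]. }
    exists (- 2 * h * (y - c) / r ^ 2).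
    apply (liminf_quot2_of_quadratic_minorant _ _ _ (h / r ^ 2)).
    intros z. pose proof (bump_ge_parabola m z) as Hpar. pose proof (bump_le_sup m z).
    fold h c r in Hpar. rewrite Hy.
    replace (h * (1 - ((y - c) / r) ^ 2) + - 2 * h * (y - c) / r ^ 2 * (z - y)
             - h / r ^ 2 * (z - y) ^ 2) with (h * (1 - ((z - c) / r) ^ 2)) by (field; lra).
    lra.
Qed.

(** * The set where the bump function is not semiconcave *)

Lemma dyadic_cell x n :
  0 <= x <= 1 -> exists k, (k < 2 ^ n)%nat /\ INR k <= x * 2 ^ n <= INR k + 1.
Proof.
  intros Hx. induction n as [|n [k [Hk Hxk]]].
  - exists O. split; [simpl; lia|]. simpl. lra.
  - simpl pow. destruct (Rle_dec (x * 2 ^ n) (INR k + /2)).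
    + exists (2 * k)%nat. split; [simpl; lia|].
      rewrite mult_INR. simpl (INR 2). lra.
    + exists (2 * k + 1)%nat. split; [simpl; lia|].
      rewrite plus_INR, mult_INR. simpl (INR 2). simpl (INR 1). lra.
Qed.

Lemma center_near x n :
  0 <= x <= 1 -> exists m, level m = n /\ Rabs (center m - x) <= (/2) ^ (n + 1).
Proof.
  intros Hx. destruct (dyadic_cell x n Hx) as [k [Hk Hxk]].
  assert (Hlevel : level (2 ^ n + k) = n) by (apply level_pow2_add, Hk).
  exists (2 ^ n + k)%nat. split; [exact Hlevel|].
  unfold center. rewrite Hlevel. replace (2 ^ n + k - 2 ^ n)%nat with k by lia.
  replace ((INR k + /2) * (/2) ^ n - x) with ((INR k + /2 - x * 2 ^ n) * (/2) ^ n)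
    by (rewrite Rmult_minus_distr_r, (Rmult_assoc x), <- Rpow_mult_distr, Rinv_r, pow1
          by lra; ring).
  assert (0 < (/2) ^ n) by (apply pow_lt; lra).
  rewrite pow_add. simpl. apply Rabs_le. split; nra.
Qed.

Definition bump_free (x : R) : Prop :=
  0 <= x <= 1 /\ forall m, radius m <= Rabs (x - center m).

Definition bump_free_before (M : nat) (x : R) : Prop :=
  0 <= x <= 1 /\ forall m, (m < M)%nat -> radius m <= Rabs (x - center m).

Definition bump_covered_from (M : nat) (x : R) : Prop :=
  exists m, (M <= m)%nat /\ Rabs (x - center m) < radius m.

Lemma outer_le_bump_covered_from M : outer_le (bump_covered_from M) ((/2) ^ (M + 1)).
Proof.
  apply (outer_le_of_cover _ (fun n => center (n + M) - radius (n + M))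
                             (fun n => center (n + M) + radius (n + M))).
  - intros n. pose proof (radius_pos (n + M)). lra.
  - intros x [m [HMm Hm]]. exists (m - M)%nat.
    replace (m - M + M)%nat with m by lia. apply Rabs_def2 in Hm. lra.
  - intros N.
    rewrite (sum_eq _ (fun n => (/2) ^ (M + 2) * (/2) ^ n))
      by (intros n _; unfold radius; rewrite !pow_add; simpl; field).
    eapply Rle_trans; [apply sum_geom_half_le, pow_le; lra|].
    rewrite !pow_add. simpl. assert (0 < (/2) ^ M) by (apply pow_lt; lra). lra.
Qed.

Lemma bump_free_before_covered M x :
  bump_free_before M x -> ~ bump_free x -> bump_covered_from M x.
Proof.
  intros [Hx Hbefore] Hnot. apply NNPP. intros Hnc. apply Hnot. split; [exact Hx|].
  intros m. apply Rnot_lt_le. intros Hm. destruct (Nat.lt_ge_cases m M).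
  - specialize (Hbefore m H). lra.
  - apply Hnc. exists m. auto.
Qed.

Lemma lebesgue_measurable_bump_free_before M : lebesgue_measurable (bump_free_before M).
Proof.
  induction M as [|M IH].
  - apply (lebesgue_measurable_ext (fun x => ~ x < 0 /\ ~ 1 < x)).
    + intros x. unfold bump_free_before. split.
      * intros [H0 H1]. split; [lra|]. intros m Hm. lia.
      * intros [Hx _]. lra.
    + apply lebesgue_measurable_inter; apply lebesgue_measurable_compl;
        [apply lebesgue_measurable_lt|apply lebesgue_measurable_gt].
  - apply (lebesgue_measurable_ext (fun x => bump_free_before M x /\
             ~ (center M - radius M < x /\ x < center M + radius M))).
    + intros x. unfold bump_free_before. rewrite <- abs_sub_ge_iff. split.
      * intros [[Hx Hbefore] HM]. split; [exact Hx|]. intros m Hm.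
        destruct (Nat.eq_dec m M) as [-> | Hne]; [exact HM|apply Hbefore; lia].
      * intros [Hx Hbefore]. split; [split; [exact Hx|]|]; intros; apply Hbefore; lia.
    + apply lebesgue_measurable_inter, lebesgue_measurable_compl,
        lebesgue_measurable_inter; auto using lebesgue_measurable_lt, lebesgue_measurable_gt.
Qed.

Lemma lebesgue_measurable_bump_free : lebesgue_measurable bump_free.
Proof.
  apply (lebesgue_measurable_of_outer_approx _ bump_free_before (fun M => (/2) ^ (M + 1))).
  - apply lebesgue_measurable_bump_free_before.
  - intros M x [Hx Hfree]. split; auto.
  - intros M. eapply outer_le_subset; [|apply outer_le_bump_covered_from].
    intros x [Hbefore Hnot]. apply (bump_free_before_covered M x Hbefore Hnot).
  - intros eps Heps. destruct (pow_small (/2) eps ltac:(lra) Heps) as [M HM].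
    exists M. assert ((/2) ^ (M + 1) <= (/2) ^ M) by (apply pow_le_1_antimono; [lra|lia]).
    lra.
Qed.

(* The bump supports have total length 1/2 < 1. *)
Lemma bump_free_not_null : ~ outer_le bump_free 0.
Proof.
  intros Hnull.
  assert (Hunit : outer_le (fun x => 0 <= x <= 1) (0 + (/2) ^ (0 + 1))).
  { eapply outer_le_subset; [|apply (outer_le_union _ _ _ _ Hnull (outer_le_bump_covered_from O))].
    intros x Hx. destruct (classic (bump_free x)) as [Hfree | Hnot]; [left; exact Hfree|].
    right. apply (bump_free_before_covered O x); [split; [exact Hx|intros; lia]|exact Hnot]. }
  apply outer_le_unit_interval in Hunit. simpl in Hunit. lra.
Qed.

Lemma bump_sup_bump_free x : bump_free x -> bump_sup x = 0.
Proof.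
  intros [_ Hfree]. apply Rle_antisym; [|apply bump_sup_ge0].
  apply bump_sup_le. intros m. rewrite bump_far; [lra|apply Hfree].
Qed.

Lemma bump_sup_limsup x xi : bump_free x -> limsup_eq_pos_infty (quot2 bump_sup x xi) x.
Proof.
  intros Hfree. apply limsup_quot2_of_steep_points. intros n.
  destruct (center_near x n (proj1 Hfree)) as [m [Hlevel Hnear]].
  exists (center m). split; [split; [|exact Hnear]|].
  - pose proof (radius_pos m). pose proof (proj2 Hfree m).
    rewrite Rabs_minus_sym. lra.
  - rewrite bump_sup_bump_free by exact Hfree.
    pose proof (bump_le_sup m (center m)). rewrite bump_center in H.
    unfold height in H. rewrite Hlevel in H. lra.
Qed.

Theorem mainTheorem9 :
  exists f : R -> R,
    continuity f /\
    (forall x : R, exists xi : R, liminf_gt_neg_infty (quot2 f x xi) x) /\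
    (exists S : R -> Prop,
        positive_measure S /\
        forall x : R, S x -> forall xi : R,
          limsup_eq_pos_infty (quot2 f x xi) x).
Proof.
  exists bump_sup. split; [exact continuity_bump_sup|]. split; [exact bump_sup_liminf|].
  exists bump_free. split.
  - split; [exact lebesgue_measurable_bump_free|exact bump_free_not_null].
  - intros x Hx xi. exact (bump_sup_limsup x xi Hx).
Qed.
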